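(* Let $F$ be a Ferrers diagram, $T\in\mathsf{EWtab}(F)$, $S=S(T)$, and let $(j,k)$ be a cell of $F$ ($j\in\mathsf{rows}(F)$, $k\in\mathsf{cols}(F)$). Then $T_{jk}$ is a cornersupport in $T$ if and only if there exists a cell $(j',k')$ of $F$ with $j'\ne j$, $k'\ne k$ such that: when $T_{jk}=0$, we have $T_{j'k'}=1$, $T_{jk'}=0$ (with $(j,k')$ a cell of $F$) and $S_{j'k}=0$; when $T_{jk}=1$, we have $T_{j'k'}=0$, $T_{j'k}=1$ (with $(j',k)$ a cell of $F$) and $S_{jk'}=1$.
   Context: Ferrers diagrams and graphs: a Ferrers diagram $F$ (English convention) of semiperimeter $n+1$ has rows and columns labeled by $0,\ldots,n$: the $n+1$ unit steps of its south-east boundary path, traversed from top-right to bottom-left, are labeled $0,\ldots,n$; a vertical step labels the row it bounds, a horizontal step the column it bounds (top row labeled $0$). $\mathsf{rows}(F)$, $\mathsf{cols}(F)$ are the label sets; $F$ has a cell in row $i$, column $j$ iff $i<j$. $G(F)$ has vertex set $\{0,\ldots,n\}$ with edges $\{i,j\}$ for $i\in\mathsf{rows}(F)$, $j\in\mathsf{cols}(F)$, $i<j$. Sandpile model on $G(F)$ with sink $0$: configurations $c\in\mathbb{N}^n$; non-sink $v$ unstable if $c_v\ge\deg(v)$; toppling sends one grain to each neighbour (grains to $0$ disappear); toppling the sink adds one grain to each neighbour of $0$. Canonical toppling of a recurrent configuration $c$: topple the sink ($U^{(0)}_c=\{0\}$), then alternately topple simultaneously all unstable vertices in $\mathsf{cols}(F)$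 ($V^{(1)}_c$), all unstable in $\mathsf{rows}(F)$ ($U^{(1)}_c$), etc.; $\mathsf{CanonTop}(c)=(U^{(0)}_c,V^{(1)}_c,U^{(1)}_c,\ldots)$ is an ordered partition of $\{0,\ldots,n\}$. EW-tableaux: $0/1$-fillings $T$ of $F$ ($T_{ij}$ = entry in row $i$, column $j$) with top row all 1s, a 0 in every other row, and no rectangle with 0s in two diagonally opposite corners and 1s in the other two; $\mathsf{EWtab}(F)$ is their set. $\phi_{TC}(T)$ is the (recurrent) configuration with $c_i$ = number of 1s in row $i$ ($i\in\mathsf{rows}(F)$), $c_i$ = number of 0s in column $i$ ($i\in\mathsf{cols}(F)$). $\mathsf{CanonTop}(T):=\mathsf{CanonTop}(\phi_{TC}(T))$. Supplementary tableau $S=S(T)$: the $|\mathsf{rows}(F)|\times|\mathsf{cols}(F)|$ array with $S_{ij}=1$ if row label $i$ lies in an earlier block of $\mathsf{CanonTop}(T)$ than column label $j$, else $0$ (it agrees with $T$ on cells of $F$). An entry $x$ of $T$ at $(j,k)$ is a cornersupport entry (the cell is a cornersupport) iff there exist a row $j'\ne j$ and column $k'\ne k$ with $S_{j'k'}\ne x$ and $S_{j'k}=S_{jk'}=x$. *)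

From mathcomp Require Import all_boot.
Set Implicit Arguments. Unset Strict Implicit. Unset Printing Implicit Defensive.

(* A Ferrers diagram F of semiperimeter n+1 is encoded by its labelling:
   [r : 'I_n.+1 -> bool], [r i = true] iff label i is a row label
   (a vertical step of the boundary path), otherwise a column label. *)

Section Ferrers.
Variable n : nat.
Variable r : 'I_n.+1 -> bool.

(* The boundary path starts with a vertical step (top row labelled 0)
   and ends with a horizontal step (so every row / column is nonempty). *)
Definition isFerrers : bool := r ord0 && ~~ r ord_max.

Definition isRow (i : 'I_n.+1) : bool := r i.
Definition isCol (j : 'I_n.+1) : bool := ~~ r j.

Definition cell (i j : 'I_n.+1) : bool := [&& r i, ~~ r j & i < j].

Definition adj (u v : 'I_n.+1) : bool := cell u v || cell v u.
Definition deg (v : 'I_n.+1) : nat := #|[set u | adj v u]|.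

(* configurations: values at the sink ord0 are irrelevant *)
Definition config := 'I_n.+1 -> nat.

Definition topple_set (A : {set 'I_n.+1}) (c : config) : config :=
  fun u => (c u - (if u \in A then deg u else 0)) + #|[set v in A | adj v u]|.

(* block toppled at step t of the canonical toppling, given the current
   configuration c': step 0 = the sink; odd steps = unstable columns;
   even steps >= 2 = unstable (non-sink) rows. *)
Definition blk_of (t : nat) (c' : config) : {set 'I_n.+1} :=
  if t == 0 then [set ord0]
  else [set v | [&& v != ord0, odd t == ~~ r v & deg v <= c' v]].

Fixpoint cfg (c : config) (t : nat) : config :=
  match t with
  | 0 => c
  | t'.+1 => topple_set (blk_of t' (cfg c t')) (cfg c t')
  end.

Definition blk (c : config) (t : nat) : {set 'I_n.+1} := blk_of t (cfg c t).

(* index of the block of CanonTop(c) containing v (first step at which v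
   topples; for recurrent c every vertex topples exactly once within
   n+1 steps, so the bound 2*(n+2) is harmless). *)
Definition topTime (c : config) (v : 'I_n.+1) : nat :=
  find (fun t => v \in blk c t) (iota 0 (2 * n.+2)).

(* 0/1 fillings: T i j is the entry in row i, column j (only meaningful
   on cells). *)
Definition filling := 'I_n.+1 -> 'I_n.+1 -> bool.

Definition isEWtab (T : filling) : Prop :=
  [/\ (forall j, cell ord0 j -> T ord0 j),
      (forall i, isRow i -> i != ord0 -> exists j, cell i j && ~~ T i j) &
      (forall i i' j j', cell i j -> cell i j' -> cell i' j -> cell i' j' ->
         i != i' -> j != j' ->
         ~ [/\ T i j = false, T i' j' = false, T i j' = true & T i' j = true])].

Definition phiTC (T : filling) : config := fun i =>
  if r i then #|[set j | cell i j && T i j]|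
  else #|[set k | cell k i && ~~ T k i]|.

Definition suppl (T : filling) (i j : 'I_n.+1) : bool :=
  topTime (phiTC T) i < topTime (phiTC T) j.

Definition cornersupport (T : filling) (j k : 'I_n.+1) : Prop :=
  exists j' k', [/\ isRow j', isCol k', j' != j & k' != k] /\
    [/\ suppl T j' k' != T j k, suppl T j' k = T j k & suppl T j k' = T j k].

End Ferrers.

From mathcomp Require Import all_boot zify.
Set Implicit Arguments. Unset Strict Implicit. Unset Printing Implicit Defensive.

(* Let tau v be the step of the canonical toppling at which v topples, so that
   S_ij = [tau i < tau j]; rows topple at even, columns at odd steps.  Every
   non-sink vertex of phi_TC(T) starts stable, so it topples at most once, and
   a vertex about to topple has received exactly one grain from each earlier
   toppled neighbour.  Comparing with the entries of T, this shows by induction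
   that a row toppled before one of its columns has a 1 there and a column
   toppled before one of its rows has a 0 there; hence S = T on F.  If the
   toppling stalled, each untoppled row would have a 0 in an untoppled column
   and each untoppled column a 1 in an untoppled row, which rectangle-freeness
   forbids; so every vertex topples.  Stability two steps earlier then yields,
   for each column k, a row a with T_ak = 1 and tau a = tau k - 1, and for
   each row a <> 0 a column b with T_ab = 0 and tau b = tau a - 1.
   If T_jk = 1 is a cornersupport, S forces tau j < tau k' < tau j' < tau k,
   so tau k >= tau j + 3 and these two predecessors of k give the cell (a,b);
   the case T_jk = 0 is symmetric. *)

Lemma card_cover (V : finType) (A B F : {set V}) :
  A \subset F -> B \subset F -> [disjoint A & B] ->
  (#|F| <= #|A| + #|B|) = (F \subset A :|: B).
Proof.
move=> sAF sBF dAB; have sABF : A :|: B \subset F by rewrite subUset sAF.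
rewrite -cardsUI (disjoint_setI0 dAB) cards0 addn0.
by rewrite -[_ <= _]andTb -sABF -eqEcard eq_sym eqEcard subset_leq_card ?andbT.
Qed.

Section CanonicalToppling.
Variables (n : nat) (r : 'I_n.+1 -> bool) (T : filling n).
Hypotheses (HF : isFerrers r) (HEW : isEWtab r T).

Local Notation c := (phiTC r T).
Local Notation blk := (blk r c).
Local Notation cfg := (cfg r c).
Local Notation tau := (topTime r c).

Lemma row0 : r ord0.
Proof. by case/andP: HF. Qed.

Lemma cell0 u : ~~ r u -> cell r ord0 u.
Proof.
move=> ru; rewrite /cell row0 ru lt0n; apply: contraNneq ru => u0.
by rewrite (_ : u = ord0) ?row0 //; apply: val_inj.
Qed.

Lemma T_row0 u : ~~ r u -> T ord0 u.
Proof. by case: HEW => T0 _ _ ru; apply/T0/cell0. Qed.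

Lemma cell_row i j : cell r i j -> r i.
Proof. by case/and3P. Qed.

Lemma cell_col i j : cell r i j -> ~~ r j.
Proof. by case/and3P. Qed.

Lemma adjC u v : adj r u v = adj r v u.
Proof. by rewrite /adj orbC. Qed.

Lemma adj_row i v : r i -> adj r v i = cell r i v.
Proof. by move=> ri; rewrite /adj /cell ri andbF. Qed.

Lemma adj_col u v : ~~ r u -> adj r v u = cell r v u.
Proof. by move=> ru; rewrite /adj /cell (negbTE ru) orbF. Qed.

Lemma deg_row i : r i -> deg r i = #|[set j | cell r i j]|.
Proof. by move=> ri; apply: eq_card => v; rewrite !inE adjC adj_row. Qed.

Lemma deg_col u : ~~ r u -> deg r u = #|[set i | cell r i u]|.
Proof. by move=> ru; apply: eq_card => v; rewrite !inE adjC adj_col. Qed.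

Lemma phiTC_row i : r i -> c i = #|[set j | cell r i j && T i j]|.
Proof. by rewrite /phiTC => ->. Qed.

Lemma phiTC_col u : ~~ r u -> c u = #|[set i | cell r i u && ~~ T i u]|.
Proof. by rewrite /phiTC => /negbTE ->. Qed.

Lemma phiTC_lt_deg v : v != ord0 -> c v < deg r v.
Proof.
move=> v0; case rv: (r v).
- rewrite phiTC_row // deg_row //; case: HEW => _ /(_ v rv v0) [j /andP [cj Tj]] _.
  apply: proper_card; rewrite properE; apply/andP; split.
    by apply/subsetP => u; rewrite !inE => /andP [].
  by apply/subsetPn; exists j; rewrite !inE ?cj // (negbTE Tj) andbF.
- rewrite phiTC_col ?rv // deg_col ?rv //.
  apply: proper_card; rewrite properE; apply/andP; split.
    by apply/subsetP => u; rewrite !inE => /andP [].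
  by apply/subsetPn; exists ord0; rewrite !inE cell0 ?rv // T_row0 ?rv.
Qed.

Definition toppled t : {set 'I_n.+1} := \bigcup_(s < t) blk s.

Lemma toppled0 : toppled 0 = set0.
Proof. by rewrite /toppled big_ord0. Qed.

Lemma toppledS t : toppled t.+1 = toppled t :|: blk t.
Proof. by rewrite /toppled big_ord_recr. Qed.

Lemma toppled_mono s t : s <= t -> toppled s \subset toppled t.
Proof.
move=> /subnKC <-; elim: (t - s) => [|m IH]; first by rewrite addn0.
by rewrite addnS toppledS (subset_trans IH) ?subsetUl.
Qed.

Lemma blk0 : blk 0 = [set ord0].
Proof. by []. Qed.

Lemma mem_blkS t v :
  (v \in blk t.+1) = [&& v != ord0, odd t.+1 == ~~ r v & deg r v <= cfg t.+1 v].
Proof. by rewrite inE. Qed.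

Lemma cfgS t u : cfg t.+1 u =
  cfg t u - (if u \in blk t then deg r u else 0) + #|[set v in blk t | adj r v u]|.
Proof. by []. Qed.

Lemma blk_odd t v : v \in blk t -> odd t = ~~ r v.
Proof.
case: t => [|t]; first by rewrite blk0 => /set1P ->; rewrite row0.
by rewrite mem_blkS => /and3P [_ /eqP].
Qed.

Lemma blk_sink t v : v \in blk t -> (v == ord0) = (t == 0).
Proof.
case: t => [|t]; first by rewrite blk0 => /set1P ->.
by rewrite mem_blkS => /andP [/negbTE].
Qed.

Lemma toppled_sink t : 0 < t -> ord0 \in toppled t.
Proof.
move=> t_gt0; rewrite (subsetP (toppled_mono t_gt0)) //.
by rewrite toppledS toppled0 blk0 set0U set11.
Qed.

Lemma blk_unstable t v : v \in blk t -> v != ord0 -> deg r v <= cfg t v.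
Proof.
case: t => [|t]; first by rewrite blk0 => /set1P ->; rewrite eqxx.
by rewrite mem_blkS => /and3P [].
Qed.

Lemma col_neq0 u : ~~ r u -> u != ord0.
Proof. by apply: contraNneq => ->; rewrite row0. Qed.

(* Grain count after t steps, valid while no vertex has toppled twice. *)
Definition balanced t := forall u, u != ord0 ->
  cfg t u + (if u \in toppled t then deg r u else 0) =
  c u + #|[set v in toppled t | adj r v u]|.

Lemma fresh_of_balanced t v : balanced t -> v \in blk t -> v \notin toppled t.
Proof.
move=> bal vb; case: (eqVneq v ord0) => [v0 | v0].
  have /eqP -> : t == 0 by rewrite -(blk_sink vb) v0.
  by rewrite toppled0 inE.
apply/negP => vD; have := bal v v0; rewrite vD.
have : #|[set w in toppled t | adj r w v]| <= deg r v.
  by apply: subset_leq_card; apply/subsetP => w; rewrite !inE adjC => /andP [].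
have := phiTC_lt_deg v0; have := blk_unstable vb v0; lia.
Qed.

Lemma balancedS t : balanced t -> balanced t.+1.
Proof.
move=> bal u u0; have fresh := fresh_of_balanced bal.
have -> : [set v in toppled t.+1 | adj r v u] =
          [set v in toppled t | adj r v u] :|: [set v in blk t | adj r v u].
  by apply/setP => v; rewrite toppledS !inE andb_orl.
rewrite cardsU (_ : _ :&: _ = set0) ?cards0 ?subn0; last first.
  apply/setP => v; rewrite !inE; apply/negP.
  by case/andP => /andP [vD _] /andP [/fresh]; rewrite vD.
rewrite cfgS toppledS inE; have := bal u u0.
case: (boolP (u \in blk t)) => ub; last by rewrite orbF; case: (u \in toppled t); lia.
by rewrite (negbTE (fresh u ub)) /=; have := blk_unstable ub u0; lia.
Qed.

Lemma balanced_all t : balanced t.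
Proof.
elim: t => [|t /balancedS //] u _; rewrite toppled0 inE addn0.
by rewrite (_ : [set _ in set0 | _] = set0) ?cards0 ?addn0 //; apply/setP => v; rewrite !inE.
Qed.

Lemma blk_fresh t v : v \in blk t -> v \notin toppled t.
Proof. exact: fresh_of_balanced (balanced_all t). Qed.

Lemma cfg_fresh t u : u != ord0 -> u \notin toppled t ->
  cfg t u = c u + #|[set v in toppled t | adj r v u]|.
Proof. by move=> u0 uD; have := balanced_all t u0; rewrite (negbTE uD) addn0. Qed.

Definition agrees t := forall i j, cell r i j ->
  (i \in toppled t -> j \notin toppled t -> T i j) /\
  (j \in toppled t -> i \notin toppled t -> ~~ T i j).

Lemma row_unstableE t i : agrees t -> r i -> i != ord0 -> i \notin toppled t ->
  (deg r i <= cfg t i) = [forall j, cell r i j && (j \notin toppled t) ==> T i j].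
Proof.
move=> agr ri i0 iD; rewrite cfg_fresh // deg_row // phiTC_row //.
have -> : [set v in toppled t | adj r v i] = [set v in toppled t | cell r i v].
  by apply/setP => v; rewrite !inE adj_row.
rewrite card_cover.
- apply/subsetP/forallP => [cover j | ones j].
    apply/implyP => /andP [cij jD].
    by move/(_ j): cover; rewrite !inE cij (negbTE jD) orbF; apply.
  rewrite !inE => cij; rewrite cij andbT /=.
  by case: (boolP (j \in toppled t)) => jD; rewrite ?orbT // (implyP (ones j)) // cij jD.
- by apply/subsetP => v; rewrite !inE => /andP [].
- by apply/subsetP => v; rewrite !inE => /andP [].
- rewrite -setI_eq0; apply/eqP/setP => v; rewrite !inE; apply/negP.
  case/andP => /andP [civ Tiv] /andP [vD _].
  by have [_ /(_ vD iD)] := agr i v civ; rewrite Tiv.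
Qed.

Lemma col_unstableE t u : agrees t -> ~~ r u -> u \notin toppled t ->
  (deg r u <= cfg t u) = [forall i, cell r i u && (i \notin toppled t) ==> ~~ T i u].
Proof.
move=> agr ru uD; rewrite cfg_fresh ?col_neq0 // deg_col // phiTC_col //.
have -> : [set v in toppled t | adj r v u] = [set v in toppled t | cell r v u].
  by apply/setP => v; rewrite !inE adj_col.
rewrite card_cover.
- apply/subsetP/forallP => [cover i | zeros i].
    apply/implyP => /andP [ciu iD].
    by move/(_ i): cover; rewrite !inE ciu (negbTE iD) orbF; apply.
  rewrite !inE => ciu; rewrite ciu andbT /=.
  by case: (boolP (i \in toppled t)) => iD; rewrite ?orbT // (implyP (zeros i)) // ciu iD.
- by apply/subsetP => v; rewrite !inE => /andP [].
- by apply/subsetP => v; rewrite !inE => /andP [].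
- rewrite -setI_eq0; apply/eqP/setP => v; rewrite !inE; apply/negP.
  case/andP => /andP [cvu Tvu] /andP [vD _].
  by have [/(_ vD uD)] := agr v u cvu; rewrite (negbTE Tvu).
Qed.

Lemma agreesS t : agrees t -> agrees t.+1.
Proof.
move=> agr i j cij; have [ri rj] := (cell_row cij, cell_col cij).
have [agr1 agr2] := agr i j cij; rewrite !toppledS !in_setU !negb_or; split.
- case/orP => [iD|ib] /andP [jD jb]; first exact: agr1.
  case: (eqVneq i ord0) => [-> | i0]; first exact: T_row0.
  have := blk_unstable ib i0; rewrite row_unstableE ?(blk_fresh ib) //.
  by move/forallP/(_ j)/implyP; apply; rewrite cij.
- case/orP => [jD|jb] /andP [iD ib]; first exact: agr2.
  have := blk_unstable jb (col_neq0 rj); rewrite col_unstableE ?(blk_fresh jb) //.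
  by move/forallP/(_ i)/implyP; apply; rewrite cij.
Qed.

Lemma agrees_all t : agrees t.
Proof. by elim: t => [|t /agreesS //] i j _; rewrite toppled0 !inE. Qed.

Lemma col_stable_witness t u : odd t -> ~~ r u -> u \notin toppled t.+1 ->
  exists i, [/\ cell r i u, T i u & i \notin toppled t].
Proof.
move=> ot ru; rewrite toppledS in_setU negb_or => /andP [uD ub].
case: t ot uD ub => [//|t] ot uD ub.
have : ~~ (deg r u <= cfg t.+1 u).
  by apply: contra ub => unst; rewrite mem_blkS col_neq0 // ot ru unst.
rewrite (col_unstableE (agrees_all _)) // => /forallPn [i].
by rewrite negb_imply negbK => /andP [/andP [ciu iD] Tiu]; exists i.
Qed.

Lemma row_stable_witness t i : ~~ odd t -> r i -> i != ord0 -> i \notin toppled t.+1 ->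
  exists j, [/\ cell r i j, ~~ T i j & j \notin toppled t].
Proof.
move=> et ri i0; rewrite toppledS in_setU negb_or => /andP [iD ib].
case: t et iD ib => [_ _ _ | t et iD ib].
  by case: HEW => _ /(_ i ri i0) [j /andP [cij Tij]] _; exists j; rewrite toppled0 inE.
have : ~~ (deg r i <= cfg t.+1 i).
  by apply: contra ib => unst; rewrite mem_blkS i0 (negbTE et) ri unst.
rewrite (row_unstableE (agrees_all _)) // => /forallPn [j].
by rewrite negb_imply => /andP [/andP [cij jD] Tij]; exists j.
Qed.

Lemma ew_zero_up (i i' u u' : 'I_n.+1) : i <= i' -> cell r i u -> ~~ T i u ->
  cell r i' u -> T i' u -> cell r i' u' && ~~ T i' u' -> cell r i u' && ~~ T i u'.
Proof.
move=> le_ii' ciu Tiu ci'u Ti'u /andP [ci'u' Ti'u'].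
have ciu' : cell r i u'.
  move: ciu ci'u' => /and3P [ri _ _] /and3P [_ ru' lt_i'u'].
  by rewrite /cell ri ru' (leq_ltn_trans le_ii' lt_i'u').
rewrite ciu' /=; apply/negP => Tiu'.
case: HEW => _ _ /(_ i i' u u' ciu ciu' ci'u ci'u'); apply.
- by apply: contraNneq Tiu => ->.
- by apply: contraNneq Ti'u' => <-.
- by split => //; apply/negbTE.
Qed.

(* Induction on #|R|: by [ew_zero_up] the zeros of the topmost row [im] in R
   contain the C-zeros of every row with a 1 in one of them, and these rows
   form a smaller stuck configuration. *)
Lemma no_stuck_rows (R C : {set 'I_n.+1}) :
  (forall u, u \in C -> exists2 i, i \in R & cell r i u && T i u) ->
  (forall i, i \in R -> exists2 u, u \in C & cell r i u && ~~ T i u) ->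
  R = set0.
Proof.
move: {2}#|R| (leqnn #|R|) => m; elim: m R C => [|m IH] R C.
  by rewrite leqn0 cards_eq0 => /eqP.
move=> cardR oneC zeroR; apply/eqP/contraT => /set0Pn [i0 i0R].
case: (arg_minnP val i0R) => im imR im_min.
set C' := [set u in C | cell r im u && ~~ T im u].
set R' := [set i in R | (i != im) &&
  [forall u, (u \in C) && (cell r i u && ~~ T i u) ==> (u \in C')]].
have oneC' u : u \in C' -> exists2 i, i \in R' & cell r i u && T i u.
  rewrite inE => /andP [uC /andP [cimu Timu]].
  have [i iR /andP [ciu Tiu]] := oneC u uC; exists i; last by rewrite ciu.
  rewrite inE iR (_ : i != im) /=; last by apply: contraNneq Timu => <-.
  apply/forallP => u'; apply/implyP => /andP [u'C zero]; rewrite inE u'C.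
  exact: ew_zero_up (im_min i iR) cimu Timu ciu Tiu zero.
have R'0 : R' = set0.
  apply: (IH R' C') => // [|i]; last first.
    rewrite inE => /andP [iR /andP [_ /forallP zeros]].
    by have [u uC zero] := zeroR i iR; exists u; rewrite // (implyP (zeros u)) // uC.
  suff : R' \proper R by move/proper_card; lia.
  rewrite properE; apply/andP; split; first by apply/subsetP => i; rewrite inE => /andP [].
  by apply/subsetPn; exists im; rewrite // inE eqxx andbF.
have [u uC zero] := zeroR im imR.
have uC' : u \in C' by rewrite inE uC.
by have [i] := oneC' u uC'; rewrite R'0 inE.
Qed.

Lemma toppled_stall t : odd t -> toppled t.+2 \subset toppled t -> toppled t = setT.
Proof.
move=> ot stall.
have sub1 : toppled t.+1 \subset toppled t := subset_trans (toppled_mono (leqnSn _)) stall.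
set R := [set i | r i && (i \notin toppled t)].
set C := [set u | ~~ r u && (u \notin toppled t)].
have oneC u : u \in C -> exists2 i, i \in R & cell r i u && T i u.
  rewrite inE => /andP [ru uD].
  have uD1 : u \notin toppled t.+1 by apply: contra uD; apply: subsetP.
  have [i [ciu Tiu iD]] := col_stable_witness ot ru uD1.
  by exists i; rewrite ?inE ?(cell_row ciu) ?ciu.
have zeroR i : i \in R -> exists2 u, u \in C & cell r i u && ~~ T i u.
  rewrite inE => /andP [ri iD].
  have i0 : i != ord0 by apply: contraNneq iD => ->; rewrite toppled_sink ?odd_gt0.
  have iD2 : i \notin toppled t.+2 by apply: contra iD; apply: subsetP.
  have [|u [ciu Tiu uD]] := row_stable_witness _ ri i0 iD2; first by rewrite /= ot.
  exists u; last by rewrite ciu.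
  rewrite inE (cell_col ciu); apply: contra uD.
  exact: (subsetP (toppled_mono (leqnSn t))).
have R0 := no_stuck_rows oneC zeroR.
apply/setP => v; rewrite inE; apply: contraT => vD.
case rv: (r v).
- have vR : v \in R by rewrite inE rv vD.
  by rewrite R0 inE in vR.
- have vC : v \in C by rewrite inE rv vD.
  by have [i] := oneC v vC; rewrite R0 inE.
Qed.

Lemma toppled_card m : minn m.+1 n.+1 <= #|toppled (2 * m).+1|.
Proof.
elim: m => [|m IH].
  have : 0 < #|toppled 1| by apply/card_gt0P; exists ord0; rewrite toppled_sink.
  by rewrite muln0; lia.
have -> : (2 * m.+1).+1 = (2 * m).+3 by rewrite mulnS.
have odd_t : odd (2 * m).+1 by rewrite /= mul2n odd_double.
have sub : toppled (2 * m).+1 \subset toppled (2 * m).+3 by apply/toppled_mono/leqW.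
have grow := subset_leq_card sub.
have [stall | no_stall] := boolP (toppled (2 * m).+3 \subset toppled (2 * m).+1).
  by move: grow; rewrite (toppled_stall odd_t stall) cardsT card_ord; lia.
have : toppled (2 * m).+1 \proper toppled (2 * m).+3.
  by rewrite properE sub no_stall.
by move/proper_card; lia.
Qed.

Lemma toppled_all v : v \in toppled (2 * n).+1.
Proof.
have/eqP -> : toppled (2 * n).+1 == setT.
  by rewrite eqEcard subsetT cardsT card_ord; have := toppled_card n; rewrite minnn.
by rewrite inE.
Qed.

Lemma toppled_has t v : (v \in toppled t) = has (fun s => v \in blk s) (iota 0 t).
Proof.
apply/bigcupP/hasP => [[s _ vs] | [s]].
  by exists (val s); rewrite // mem_iota add0n ltn_ord.
by rewrite mem_iota add0n => /andP [_ st] vs; exists (Ordinal st).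
Qed.

Lemma mem_toppled_small t v : t <= 2 * n.+2 -> (v \in toppled t) = (tau v < t).
Proof.
move=> tN; rewrite toppled_has /topTime -(subnKC tN) iotaD find_cat size_iota.
case: ifP => [|_]; last by rewrite ltnNge leq_addr.
by rewrite has_find size_iota => ->.
Qed.

Lemma tau_lt v : tau v < (2 * n).+1.
Proof. by rewrite -mem_toppled_small ?toppled_all //; lia. Qed.

Lemma mem_toppled t v : (v \in toppled t) = (tau v < t).
Proof.
have [|lt_t] := leqP t (2 * n.+2); first exact: mem_toppled_small.
rewrite (subsetP (toppled_mono _) _ (toppled_all v)); last by lia.
by have := tau_lt v; lia.
Qed.

Lemma tau_blk v : v \in blk (tau v).
Proof.
have := toppledS (tau v); move/setP/(_ v).
by rewrite in_setU !mem_toppled ltnSn ltnn.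
Qed.

Lemma tau_odd v : odd (tau v) = ~~ r v.
Proof. exact: blk_odd (tau_blk v). Qed.

Lemma tau_eq0 v : (tau v == 0) = (v == ord0).
Proof. by rewrite (blk_sink (tau_blk v)). Qed.

Lemma tau_sink : tau ord0 = 0.
Proof. by apply/eqP; rewrite tau_eq0. Qed.

Lemma tau_neq i u : r i -> ~~ r u -> tau i != tau u.
Proof. by move=> ri ru; apply/eqP => tiu; move: (tau_odd i); rewrite tiu tau_odd ri ru. Qed.

Lemma suppl_cell i j : cell r i j -> suppl r T i j = T i j.
Proof.
move=> cij; have := tau_neq (cell_row cij) (cell_col cij); rewrite /suppl.
case: ltngtP => // lt_ij _.
- have [agr _] := agrees_all (tau i).+1 cij.
  by rewrite agr // !mem_toppled ltnS // -ltnNge.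
- have [_ agr] := agrees_all (tau j).+1 cij.
  by rewrite (negbTE (agr _ _)) // !mem_toppled ltnS // -ltnNge.
Qed.

(* Column [b] was stable two steps before toppling, so a row with a 1 in [b]
   was untoppled then, and it must topple in between. *)
Lemma col_pred b : ~~ r b -> exists2 a, cell r a b && T a b & (tau a).+1 = tau b.
Proof.
move=> rb; have ob : odd (tau b) by rewrite tau_odd.
have [tb1 | tb1] := eqVneq (tau b) 1.
  by exists ord0; rewrite ?cell0 ?T_row0 // tau_sink tb1.
have [s ts] : exists s, tau b = s.+2.
  by move: ob tb1; case: (tau b) => [|[|s]] // _ _; exists s.
have os : odd s by move: ob; rewrite ts /= negbK.
have bD : b \notin toppled s.+1 by rewrite mem_toppled ts; lia.
have [a [cab Tab aD]] := col_stable_witness os rb bD.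
exists a; first by rewrite cab.
have : s <= tau a by rewrite mem_toppled -leqNgt in aD.
have : tau a < tau b by rewrite -(suppl_cell cab) in Tab.
have : tau a != s by apply: contraTneq os => <-; rewrite tau_odd (cell_row cab).
lia.
Qed.

Lemma row_pred j : r j -> j != ord0 -> exists2 b, cell r j b && ~~ T j b & (tau b).+1 = tau j.
Proof.
move=> rj j0; have ej : odd (tau j) = false by rewrite tau_odd rj.
have [s ts] : exists s, tau j = s.+2.
  by move: ej j0; rewrite -tau_eq0; case: (tau j) => [|[|s]] // _ _; exists s.
have es : ~~ odd s by move: ej; rewrite ts /= negbK => ->.
have jD : j \notin toppled s.+1 by rewrite mem_toppled ts; lia.
have [b [cjb Tjb bD]] := row_stable_witness es rj j0 jD.
exists b; first by rewrite cjb.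
have : s <= tau b by rewrite mem_toppled -leqNgt in bD.
have : ~~ (tau j < tau b) by rewrite -[_ < _]/(suppl r T j b) suppl_cell.
have : tau b != tau j by rewrite eq_sym tau_neq ?(cell_col cjb).
have : tau b != s by apply: contraNneq es => <-; rewrite tau_odd (cell_col cjb).
lia.
Qed.

Lemma col_corner k : ~~ r k -> 2 < tau k -> exists a b,
  [/\ cell r a b && ~~ T a b, cell r a k && T a k, (tau b).+1 = tau a & (tau a).+1 = tau k].
Proof.
move=> rk tk; have [a /andP [cak Tak] ta] := col_pred rk.
have a0 : a != ord0 by rewrite -tau_eq0; lia.
have [b zab tb] := row_pred (cell_row cak) a0.
by exists a, b; rewrite zab cak Tak.
Qed.

Lemma row_corner j : r j -> 2 < tau j -> exists a b,
  [/\ cell r a b && T a b, cell r j b && ~~ T j b, (tau a).+1 = tau b & (tau b).+1 = tau j].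
Proof.
move=> rj tj; have j0 : j != ord0 by rewrite -tau_eq0; lia.
have [b /andP [cjb Tjb] tb] := row_pred rj j0.
have [a oab ta] := col_pred (cell_col cjb).
by exists a, b; rewrite oab cjb Tjb.
Qed.

Lemma cornersupport_one j k : cell r j k -> T j k -> cornersupport r T j k ->
  exists j' k', [/\ cell r j' k', j' != j, k' != k &
    [/\ T j' k' = false, cell r j' k, T j' k = true & suppl r T j k' = true]].
Proof.
move=> cjk Tjk [j' [k' [[rj' rk' _ _]]]]; rewrite Tjk /suppl => -[s1 s2 s3].
have neq := tau_neq rj' rk'; have tk : 2 < tau k by lia.
have [a [b [/andP [cab Tab] /andP [cak Tak] tb ta]]] := col_corner (cell_col cjk) tk.
exists a, b; split => //.
- by apply/eqP => aj; subst a; lia.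
- by apply/eqP => bk; subst b; lia.
- by split => //; [exact/negbTE | rewrite /suppl; lia].
Qed.

Lemma cornersupport_zero j k : cell r j k -> T j k = false -> cornersupport r T j k ->
  exists j' k', [/\ cell r j' k', j' != j, k' != k &
    [/\ T j' k' = true, cell r j k', T j k' = false & suppl r T j' k = false]].
Proof.
move=> cjk Tjk [j' [k' [[rj' rk' _ _]]]]; rewrite Tjk /suppl => -[s1 s2 s3].
have neq1 := tau_neq rj' (cell_col cjk); have neq2 := tau_neq (cell_row cjk) rk'.
have tj : 2 < tau j by lia.
have [a [b [/andP [cab Tab] /andP [cjb Tjb] ta tb]]] := row_corner (cell_row cjk) tj.
exists a, b; split => //.
- by apply/eqP => aj; subst a; lia.
- by apply/eqP => bk; subst b; lia.
- by split => //; [exact/negbTE | rewrite /suppl; apply/negbTE; lia].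
Qed.

End CanonicalToppling.

Theorem corollary4p18 (n : nat) (r : 'I_n.+1 -> bool) (T : filling n)
  (j k : 'I_n.+1) :
  isFerrers r -> isEWtab r T -> cell r j k ->
  (cornersupport r T j k <->
   exists j' k', [/\ cell r j' k', j' != j, k' != k &
     if T j k == false then
       [/\ T j' k' = true, cell r j k', T j k' = false & suppl r T j' k = false]
     else
       [/\ T j' k' = false, cell r j' k, T j' k = true & suppl r T j k' = true]]).
Proof.
move=> HF HEW cjk; split.
  by case Tjk: (T j k); [exact: cornersupport_one | exact: cornersupport_zero].
case=> j' [k' [cjk' j'j k'k cond]]; exists j', k'.
split; first by rewrite /isRow /isCol (cell_row cjk') (cell_col cjk').
rewrite (suppl_cell HF HEW cjk'); move: cond.
by case: (T j k) => /= -[-> cj'k Tj'k s]; rewrite ?(suppl_cell HF HEW cj'k) ?Tj'k.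
Qed.
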